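(* Let $(G,c)$ be a $k$-terminal network with terminal set $Q$, where $G$ is a connected plane graph and $c$ is such that any two distinct subsets of $E(G)$ have distinct total costs. Let $G^*$ be the planar dual of $G$. For $S\subset Q$ ($S\ne\emptyset,Q$) let $E_S$ be the (unique) cutset of the minimum-cost $S$-separating cut in $G$, and $E_S^*=\{e^*:e\in E_S\}$. Then for all such $S,T\subset Q$, the subgraph $G^*[E_S^*\cup E_T^*]$ of $G^*$ (consisting of the edges $E_S^*\cup E_T^*$ and their endpoints) has at most $6k$ vertices of degree greater than $2$.
   Context: The dual $G^*$ of a connected plane (multi-)graph $G$ has a vertex $v^*_f$ for each face $f$ of $G$, and for each edge $e\in E(G)$ lying on the boundary of faces $f_1,f_2$ a dual edge $e^*=(v^*_{f_1},v^*_{f_2})$ with cost $c(e^* )=c(e)$ ($G^*$ may have loops and parallel edges; a loop contributes 2 to the degree). For $S\subset Q$, $\bar S=Q\setminus S$; a cut $(W,V(G)\setminus W)$ is $S$-separating if $W\cap Q\in\{S,\bar S\}$; its cutset is the set of edges with exactly one endpoint in $W$, and its cost is the total cost of these edges. Edge costs are positive reals. *)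

(* Plane multigraphs are represented as combinatorial maps
   (rotation systems) of genus 0. *)
From HB Require Import structures.
From mathcomp Require Import all_boot all_order all_algebra.
Set Implicit Arguments. Unset Strict Implicit. Unset Printing Implicit Defensive.
Import Order.TTheory GRing.Theory Num.Theory.
Local Open Scope ring_scope.

(* Darts D; [a] pairs the two darts (half-edges) of each edge; [n] is the
   rotation of darts around their vertex.  Vertices = orbits of [n],
   edges = orbits of [a], faces = orbits of [n \o a]. *)
Definition orbits (D : finType) (f : D -> D) : {set {set D}} :=
  [set [set y | fconnect f x y] | x : D].

Definition vertices (D : finType) (n : D -> D) := orbits n.
Definition faces (D : finType) (a n : D -> D) := orbits (n \o a).

(* A connected plane (multi)graph: a connected combinatorial map of genus 0
   (Euler: V - E + F = 2). *)
Definition connected_plane_map (D : finType) (a n : D -> D) : Prop :=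
  [/\ involutive a, (forall x, a x != x), injective n,
      (forall x y, connect [rel u v | (v == n u) || (v == a u)] x y) &
      (#|vertices n| + #|faces a n| = #|D|./2 + 2)%N ].

(* a set of darts representing a set of edges *)
Definition a_closed (D : finType) (a : D -> D) (F : {set D}) : Prop :=
  forall x, (x \in F) = (a x \in F).

(* a set of darts representing a set of vertices W *)
Definition n_closed (D : finType) (n : D -> D) (W : {set D}) : Prop :=
  forall x, (x \in W) = (n x \in W).

Definition cutset (D : finType) (a : D -> D) (W : {set D}) : {set D} :=
  [set x | (x \in W) != (a x \in W)].

(* cost of an edge set (given as an a-closed dart set): each edge has 2 darts *)
Definition ecost (R : realFieldType) (D : finType) (c : D -> R) (F : {set D}) : R :=
  (\sum_(x in F) c x) / 2%:R.

(* terminals q : 'I_k -> D (q i is a dart at the i-th terminal vertex) *)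
Definition separating (D : finType) (n : D -> D) (k : nat) (q : 'I_k -> D)
  (S : {set 'I_k}) (W : {set D}) : Prop :=
  n_closed n W /\ ([set i | q i \in W] = S \/ [set i | q i \in W] = ~: S).

Definition min_sep_cutset (R : realFieldType) (D : finType) (a n : D -> D)
  (c : D -> R) (k : nat) (q : 'I_k -> D) (S : {set 'I_k}) (E : {set D}) : Prop :=
  exists W, [/\ separating n q S W, E = cutset a W &
     forall W', separating n q S W' -> ecost c E <= ecost c (cutset a W')].

(* number of vertices of degree > 2 in the subgraph G*[F*] of the dual:
   dual vertices are faces, the degree of face f is the number of darts of F
   in f (a dual loop contributes 2). *)
Definition dual_high_degree (D : finType) (a n : D -> D) (F : {set D}) : nat :=
  #|[set f in faces a n | (2 < #|f :&: F|)%N]|.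

(* Put F = E_S ∪ E_T and let G - F be the map in which
   the darts of F are left unpaired ([delete_edges]).  Three facts are combined
   with Euler's formula V + #faces = |D|/2 + 2 for G:
   1. Euler's inequality for arbitrary maps, 2(V + #faces) <= #paired darts +
      4 #components, proved by removing the edges one at a time; applied to G - F.
   2. Every component of G - F contains a terminal: otherwise flipping that
      component across both cuts keeps them separating and, costs being generic,
      makes one of them strictly cheaper.  So G - F has at most k components.
   3. A face meets every cutset in an even number of darts, so a face touching F
      has dual degree >= 2; the faces avoiding F are still faces of G - F.
   Together these give #high-degree faces <= 4k - 3 <= 6k. *)

From mathcomp Require Import all_boot all_order all_algebra.
From mathcomp Require Import perm zify lra.
Set Implicit Arguments. Unset Strict Implicit. Unset Printing Implicit Defensive.

Section Components.
Variable D : finType.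

Definition components (r : rel D) : {set {set D}} :=
  [set [set v | connect r u v] | u : D].

Lemma connect_symP (r : rel D) :
  (forall u v, r u v -> connect r v u) -> connect_sym r.
Proof.
move=> rK; suff rev u v : connect r u v -> connect r v u.
  by move=> u v; apply/idP/idP; apply: rev.
move/connectP=> [p pth ->] {v}; elim: p u pth => [|w p IHp] u /=.
  by rewrite connect0.
by move/andP=> [ruw pth]; apply: connect_trans (IHp _ pth) (rK _ _ ruw).
Qed.

Lemma component_eq (r : rel D) u w : connect_sym r -> connect r u w ->
  [set v | connect r u v] = [set v | connect r w v].
Proof.
move=> rsym uw; apply/setP=> v; rewrite !inE; apply/idP/idP => [uv|]; last first.
  exact: connect_trans.
by rewrite rsym in uw; apply: connect_trans uw uv.
Qed.

Lemma components_le_terminals (r : rel D) (k : nat) (q : 'I_k -> D) :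
  connect_sym r -> (forall u, exists i, connect r u (q i)) ->
  (#|components r| <= k)%N.
Proof.
move=> rsym reach.
apply: (@leq_trans #|[set [set v | connect r (q i) v] | i : 'I_k]|).
  apply: subset_leq_card; apply/subsetP=> C /imsetP[u _ ->].
  by have [i uq] := reach u; rewrite (component_eq rsym uq) imset_f.
by apply: leq_trans (leq_imset_card _ _) _; rewrite card_ord.
Qed.

Section AddEdge.
Variables (r re : rel D) (x y : D).
Hypothesis r_sym : connect_sym r.
Hypothesis re_sub : forall u v,
  re u v -> [|| r u v, (u == x) && (v == y) | (u == y) && (v == x)].

Local Notation K := [set w | connect r x w || connect r y w].

Lemma connect_add_edge u v :
  connect re u v -> connect r u v \/ (u \in K /\ v \in K).
Proof.
move/connectP=> [p pth ->] {v}; elim: p u pth => [|w p IHp] u /=.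
  by left; rewrite connect0.
move/andP=> [reuw pth]; have := IHp _ pth; set v := last w p => IHw.
have xK : x \in K by rewrite inE connect0.
have yK : y \in K by rewrite inE connect0 orbT.
case/or3P: (re_sub reuw) => [ruw|/andP[/eqP-> /eqP ew]|/andP[/eqP-> /eqP ew]].
- case: IHw => [wv|[wK vK]]; first by left; apply: connect_trans (connect1 ruw) wv.
  right; split=> //; have wu : connect r w u by rewrite r_sym connect1.
  by rewrite !inE in wK *; case/orP: wK => c; rewrite (connect_trans c wu) ?orbT.
- right; split=> //; case: IHw => [wv|[_ //]].
  by rewrite inE -ew wv orbT.
- right; split=> //; case: IHw => [wv|[_ //]].
  by rewrite inE -ew wv.
Qed.

(* Adding an edge merges at most two components: every component of [r] other
   than that of y is recovered from its [re]-component. *)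
Lemma components_add_edge : (#|components r| <= #|components re| + 1)%N.
Proof.
pose cl u := [set v | connect r u v].
set A := [set cl u | u in ~: cl y].
pose g (C : {set D}) := \bigcup_(w in C :\: cl y) cl w.
have gE u : u \notin cl y -> g [set v | connect re u v] = cl u.
  move=> uy; apply/setP=> v; apply/bigcupP/idP => [[w]|uv]; last first.
    by exists u; rewrite // !inE connect0 andbT; rewrite inE in uy.
  rewrite !inE => /andP[wy uw] wv.
  case: (connect_add_edge uw) => [uw'|[uK wK]]; first exact: connect_trans uw' wv.
  rewrite inE in uy; rewrite !inE (negbTE uy) (negbTE wy) !orbF in uK wK.
  by rewrite r_sym in uK; apply: connect_trans uK (connect_trans wK wv).
have Ag : A \subset g @: components re.
  apply/subsetP=> C /imsetP[u uy ->]; rewrite inE in uy.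
  by rewrite -(gE u uy); apply: imset_f; apply: imset_f.
have rA : components r \subset A :|: [set cl y].
  apply/subsetP=> C /imsetP[u _ ->]; rewrite !inE.
  case: (boolP (u \in cl y)) => [yu|uy]; apply/orP; [right|left].
    by rewrite (component_eq r_sym (_ : connect r u y)) // r_sym; rewrite inE in yu.
  by apply: imset_f; rewrite inE.
apply: leq_trans (subset_leq_card rA) _; apply: leq_trans (leq_card_setU _ _) _.
by rewrite cards1 leq_add2r; apply: leq_trans (subset_leq_card Ag) (leq_imset_card _ _).
Qed.

Hypothesis r_sub : forall u v, r u v -> connect re u v.

Lemma components_add_inner_edge : connect r x y -> components r = components re.
Proof.
move=> xy; have same : connect r =2 connect re.
  move=> u v; apply/idP/idP; apply: connect_sub => {u v} u v; first exact: r_sub.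
  move/re_sub/or3P => [ruv|/andP[/eqP-> /eqP->]|/andP[/eqP-> /eqP->]] //.
  - exact: connect1.
  - by rewrite r_sym.
by apply: eq_imset => u; apply/setP=> v; rewrite !inE same.
Qed.
End AddEdge.
End Components.

Section EulerInequality.
Local Open Scope group_scope.
Variable D : finType.

Definition map_rel (s t : D -> D) : rel D := [rel u v | (v == s u) || (v == t u)].

Lemma porbitE (s : {perm D}) x : porbit s x = [set y | fconnect s x y].
Proof.
apply/setP=> y; rewrite inE; apply/porbitP/idP => [[i ->]|xy].
  by rewrite permX fconnect_iter.
by exists (findex s x y); rewrite permX iter_findex.
Qed.

Lemma orbits_perm (s : {perm D}) (f : D -> D) : s =1 f -> orbits f = porbits s.
Proof.
move=> sf; apply: eq_imset => x; rewrite porbitE; apply/setP=> y.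
by rewrite !inE (eq_fconnect sf).
Qed.

Lemma map_rel_sym (s t : D -> D) : injective s -> involutive t ->
  connect_sym (map_rel s t).
Proof.
move=> s_inj tK; apply: connect_symP => u v /orP[/eqP->|/eqP->].
  have : fconnect s (s u) u by rewrite fconnect_sym ?fconnect1.
  by apply: connect_sub => a b /eqP<-; apply: connect1; rewrite /map_rel /= eqxx.
by apply: connect1; rewrite /map_rel /= tK eqxx orbT.
Qed.

Lemma fconnect_map_rel (s t : {perm D}) u v :
  fconnect (t * s) u v -> connect (map_rel s t) u v.
Proof.
apply: connect_sub => a b /eqP<-; rewrite permM.
by apply: (@connect_trans _ _ (t a)); apply: connect1; rewrite /map_rel /= eqxx ?orbT.
Qed.

Lemma components_rotation (s : {perm D}) :
  components (map_rel s (1 : {perm D})) = porbits s.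
Proof.
apply: eq_imset => u; rewrite porbitE; apply/setP=> v; rewrite !inE.
apply/idP/idP; apply: connect_sub => a b.
  by case/orP=> /eqP->; rewrite ?perm1 ?connect0 ?fconnect1.
by move=> /eqP<-; apply: connect1; rewrite /map_rel /= eqxx.
Qed.

Lemma perm_fix_all (t : {perm D}) : [set u | t u != u] = set0 -> t = 1.
Proof.
move=> /setP fix_t; apply/permP=> u; rewrite perm1; apply/eqP.
by have := fix_t u; rewrite !inE => /negbFE.
Qed.

(* Removing the edge {x, t x} from the pairing t leaves t' = (x, t x) * t. *)
Section RemoveEdge.
Variables (t : {perm D}) (x : D).
Hypothesis tK : involutive t.
Local Notation y := (t x).
Local Notation t' := (tperm x y * t).

Lemma remove_edgeE u : t' u = if (u == x) || (u == y) then u else t u.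
Proof.
rewrite permM; case: tpermP => [->|->|/eqP/negbTE-> /eqP/negbTE->] //.
  by rewrite eqxx.
by rewrite tK eqxx orbT.
Qed.

Lemma remove_edge_involutive : involutive t'.
Proof.
move=> u; case: (boolP ((u == x) || (u == y))) => [uxy|uxy].
  by rewrite (remove_edgeE u) uxy remove_edgeE uxy.
have tuxy : ~~ ((t u == x) || (t u == y)).
  by rewrite -{1}[x]tK !(inj_eq (inv_inj tK)) orbC.
by rewrite (remove_edgeE u) (negbTE uxy) remove_edgeE (negbTE tuxy) tK.
Qed.

Lemma remove_edge_moved : t x != x ->
  (#|[set u | t' u != u]| + 2 = #|[set u | t u != u]|)%N.
Proof.
move=> tx; have -> : [set u | t' u != u] = [set u | t u != u] :\ x :\ y.
  apply/setP=> u; rewrite !inE remove_edgeE.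
  case: (eqVneq u x) => [->|ux]; first by rewrite eqxx /= andbF.
  by case: (eqVneq u y) => _; rewrite /= ?eqxx.
rewrite [RHS](cardsD1 x) [#|_ :\ x|](cardsD1 y) !inE tK tx eq_sym tx.
by rewrite addnC.
Qed.

Lemma remove_edge_mul : t = tperm x y * t'.
Proof. by rewrite mulgA tperm2 mul1g. Qed.

Variable s : {perm D}.

Lemma remove_edge_rel u v : map_rel s t u v ->
  [|| map_rel s t' u v, (u == x) && (v == y) | (u == y) && (v == x)].
Proof.
rewrite /map_rel /= remove_edgeE => /orP[->|/eqP->] //.
case: (eqVneq u x) => [->|_]; first by rewrite eqxx !orbT.
case: (eqVneq u y) => [uy|_] /=; last by rewrite eqxx orbT.
by rewrite uy tK eqxx !orbT.
Qed.

Lemma remove_edge_rel_sub u v : map_rel s t' u v -> connect (map_rel s t) u v.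
Proof.
rewrite /map_rel /= remove_edgeE => /orP[suv|].
  by apply: connect1; rewrite /map_rel /= suv.
by case: ifP => _ /eqP->; [exact: connect0 | apply: connect1; rewrite /map_rel /= eqxx orbT].
Qed.
End RemoveEdge.

(* Euler's inequality V + #faces <= #edges + 2 #components for a map with
   rotation s and partial edge pairing t, by induction on the number of edges:
   removing an edge changes #faces by one (porbits_mul_tperm) and either merges
   two faces inside a component or splits off at most one new component. *)
Lemma euler_ineq_perm (s t : {perm D}) : involutive t ->
  ((#|porbits s| + #|porbits (t * s)|).*2 <=
    #|[set u | t u != u]| + 4 * #|components (map_rel s t)|)%N.
Proof.
move=> tK; have [m] := ubnP #|[set u | t u != u]|; elim: m t tK => // m IHm t tK mt.
have [/perm_fix_all ->|[x xm]] := set_0Vmem [set u | t u != u].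
  by rewrite components_rotation mul1g; set z := #|porbits s|; lia.
rewrite inE in xm; set t' := tperm x (t x) * t.
have t'K : involutive t' := remove_edge_involutive x tK.
have moved_t' : (#|[set u | t' u != u]| + 2 = _)%N := remove_edge_moved tK xm.
have /IHm-/(_ t'K) IH : (#|[set u | t' u != u]| < m)%N by lia.
have faces_ts : (#|porbits (t * s)| + (x \notin porbit (t' * s) (t x)).*2
    = #|porbits (t' * s)| + 1)%N.
  have := porbits_mul_tperm (t' * s) x (t x).
  by rewrite /= mulgA -remove_edge_mul eq_sym xm.
have t'_sym := map_rel_sym (@perm_inj _ s) t'K.
have rel_t := remove_edge_rel (s := s) x tK.
case: (boolP (x \in porbit (t' * s) (t x))) => x_face_y; last first.
  have := components_add_edge t'_sym rel_t.
  by move: faces_ts IH moved_t'; rewrite x_face_y /= -!addnn; lia.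
have x_conn_y : connect (map_rel s t') x (t x).
  by rewrite t'_sym; rewrite porbitE inE in x_face_y; exact: fconnect_map_rel.
have rel_t' := remove_edge_rel_sub (s := s) (x := x) tK.
rewrite -(components_add_inner_edge t'_sym rel_t rel_t' x_conn_y).
by move: faces_ts IH moved_t'; rewrite x_face_y /= -!addnn; lia.
Qed.

Lemma euler_inequality (n t : D -> D) : injective n -> involutive t ->
  ((#|orbits n| + #|orbits (n \o t)|).*2 <=
    #|[set u | t u != u]| + 4 * #|components (map_rel n t)|)%N.
Proof.
move=> n_inj tK; set s := perm n_inj; set tp := perm (inv_inj tK).
have tpK : involutive tp by move=> u; rewrite !permE tK.
have same_rel : map_rel n t =2 map_rel s tp by move=> u v; rewrite /map_rel /= !permE.
rewrite (orbits_perm (s := s)) => [|u]; last by rewrite permE.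
rewrite (orbits_perm (s := tp * s)) => [|u]; last by rewrite permM !permE.
have -> : [set u | t u != u] = [set u | tp u != u] by apply/setP=> u; rewrite !inE permE.
have -> : components (map_rel n t) = components (map_rel s tp).
  by apply: eq_imset => u; apply/setP=> v; rewrite !inE (eq_connect same_rel).
exact: euler_ineq_perm.
Qed.
End EulerInequality.

Section Orbits.
Variable D : finType.

Definition symdiff (A B : {set D}) : {set D} := [set y | (y \in A) != (y \in B)].

Lemma odd_card_symdiff (A B : {set D}) : odd #|symdiff A B| = odd (#|A| + #|B|).
Proof.
have := cardsID (A :&: B) (A :|: B).
have -> : (A :|: B) :&: (A :&: B) = A :&: B.
  by apply/setP=> y; rewrite !inE; case: (y \in A); case: (y \in B).
have -> : (A :|: B) :\: (A :&: B) = symdiff A B.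
  by apply/setP=> y; rewrite !inE; case: (y \in A); case: (y \in B).
by move=> cardU; rewrite -cardsUI -cardU addnAC addnn oddD odd_double.
Qed.

(* A cycle of an injective f crosses the boundary of any set W an even number
   of times: the darts of the cycle in W and in f^-1(W) are equinumerous. *)
Lemma orbit_boundary_even (f : D -> D) (W : {set D}) x : injective f ->
  ~~ odd #|[set y | fconnect f x y] :&: [set y | (y \in W) != (f y \in W)]|.
Proof.
move=> f_inj; set O := [set y | fconnect f x y].
have -> : O :&: [set y | (y \in W) != (f y \in W)] =
    symdiff (O :&: W) (f @^-1: (O :&: W)).
  apply/setP=> y; rewrite !inE -(same_fconnect1_r f_inj).
  by case: (fconnect f x y).
by rewrite odd_card_symdiff card_preimset // addnn odd_double.
Qed.

Lemma orbit_eq_on (f g : D -> D) x : (forall y, fconnect f x y -> f y = g y) ->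
  [set y | fconnect f x y] = [set y | fconnect g x y].
Proof.
move=> fg; have iter_fg i : iter i f x = iter i g x.
  by elim: i => // i IHi; rewrite !iterS -IHi fg ?fconnect_iter.
apply/setP=> y; rewrite !inE; apply/idP/idP => [/iter_findex <-|/iter_findex <-].
  by rewrite iter_fg fconnect_iter.
by rewrite -iter_fg fconnect_iter.
Qed.

(* The orbits of an injective function partition D. *)
Lemma sum_orbits_card (f : D -> D) (F : {set D}) : injective f ->
  (\sum_(O in orbits f) #|O :&: F| = #|F|)%N.
Proof.
move=> f_inj; pose orb x := [set y | fconnect f x y].
have orbE x O : O \in orbits f -> (x \in O) = (O == orb x).
  move=> /imsetP[z _ ->]; apply/idP/eqP => [zx|->]; last by rewrite inE connect0.
  apply/setP=> y; rewrite !inE in zx *; apply/idP/idP => [zy|xy].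
    by rewrite fconnect_sym // in zx; apply: connect_trans zx zy.
  exact: connect_trans zx xy.
transitivity (\sum_(O in orbits f) \sum_(x in F) (x \in O) : nat)%N.
  apply: eq_bigr => O _; rewrite -sum1_card big_mkcond [RHS]big_mkcond.
  by apply: eq_bigr => x _; rewrite inE; case: (x \in O); case: (x \in F).
rewrite exchange_big -sum1_card; apply: eq_bigr => x _.
rewrite (bigD1 (orb x)) ?imset_f //= big1 => [|O /andP[Of ne]].
  by rewrite inE connect0.
by rewrite orbE // (negbTE ne).
Qed.

Lemma card_set_filter (P : {set {set D}}) (Q : pred {set D}) :
  #|[set O in P | Q O]| = (\sum_(O in P) Q O)%N.
Proof.
rewrite -sum1_card big_mkcond [RHS]big_mkcond.
by apply: eq_bigr => O _; rewrite inE; case: (O \in P); case: (Q O).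
Qed.

(* Blocks meeting F at least twice: each contributes 2, the crowded ones 3. *)
Lemma high_degree_count (P : {set {set D}}) (F : {set D}) :
  (forall O, O \in P -> O :&: F != set0 -> 2 <= #|O :&: F|)%N ->
  (#|[set O in P | 2 < #|O :&: F|]| + 2 * #|[set O in P | O :&: F != set0]|
    <= \sum_(O in P) #|O :&: F|)%N.
Proof.
move=> touch2; rewrite !card_set_filter big_distrr -big_split /=.
apply: leq_sum => O OP; case: (eqVneq (O :&: F) set0) => [->|meet].
  by rewrite cards0.
by have := touch2 O OP meet; case: #|_| => [|[|[|d]]].
Qed.
End Orbits.

Section DualDegrees.
Variables (D : finType) (a n : D -> D).
Hypothesis a_inv : involutive a.
Hypothesis n_inj : injective n.

(* The edge pairing of G - F: the darts of F are left unpaired. *)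
Definition delete_edges (F : {set D}) (x : D) : D := if x \in F then x else a x.

Lemma delete_edges_involutive (F : {set D}) : a_closed a F ->
  involutive (delete_edges F).
Proof.
move=> aF x; rewrite /delete_edges; case: (boolP (x \in F)) => xF; first by rewrite xF.
by rewrite -aF (negbTE xF) a_inv.
Qed.

Lemma delete_edges_moved (F : {set D}) : (forall x, a x != x) ->
  [set x | delete_edges F x != x] = ~: F.
Proof.
move=> a_fix; apply/setP=> x; rewrite !inE /delete_edges.
by case: (x \in F); rewrite ?eqxx ?a_fix.
Qed.

Lemma face_cutset_even (W O : {set D}) : n_closed n W -> O \in faces a n ->
  ~~ odd #|O :&: cutset a W|.
Proof.
move=> nW /imsetP[x _ ->].
have na_inj : injective (n \o a) by apply: inj_comp => //; exact: inv_inj.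
have -> : cutset a W = [set y | (y \in W) != ((n \o a) y \in W)].
  by apply/setP=> y; rewrite !inE /= -nW.
exact: orbit_boundary_even.
Qed.

Variables (WS WT : {set D}).
Hypotheses (nWS : n_closed n WS) (nWT : n_closed n WT).
Local Notation F := (cutset a WS :|: cutset a WT).
Local Notation touched := [set O in faces a n | O :&: F != set0].

Lemma touched_face_meets_twice O : O \in faces a n -> O :&: F != set0 ->
  (2 <= #|O :&: F|)%N.
Proof.
move=> Oface /set0Pn[y yOF].
suff cut_twice W : n_closed n W -> cutset a W \subset F -> y \in cutset a W ->
    (2 <= #|O :&: F|)%N.
  by move: yOF; rewrite in_setI in_setU => /andP[_ /orP[]]; apply: cut_twice;
    rewrite ?subsetUl ?subsetUr.
move=> nW WF yW; apply: leq_trans (subset_leq_card (setIS O WF)).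
have : (0 < #|O :&: cutset a W|)%N.
  by apply/card_gt0P; exists y; rewrite inE yW andbT; case/setIP: yOF.
by have := face_cutset_even nW Oface; case: #|_| => [|[|d]].
Qed.

Lemma dual_high_degree_bound :
  (dual_high_degree a n F + 2 * #|touched| <= #|F|)%N.
Proof.
rewrite -(sum_orbits_card F (inj_comp n_inj (inv_inj a_inv))).
exact: high_degree_count touched_face_meets_twice.
Qed.

Lemma untouched_face_survives O : O \in faces a n -> O :&: F = set0 ->
  O \in orbits (n \o delete_edges F).
Proof.
move=> /imsetP[x _ ->] avoid.
rewrite (@orbit_eq_on _ _ (n \o delete_edges F)) ?imset_f //.
move=> y xy; rewrite /= /delete_edges; case: ifP => // yF.
by move/setP: avoid => /(_ y); rewrite in_setI inE xy yF in_set0.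
Qed.

Lemma faces_count :
  (#|faces a n| <= #|touched| + #|orbits (n \o delete_edges F)|)%N.
Proof.
apply: leq_trans (leq_card_setU touched (orbits (n \o delete_edges F))).
apply: subset_leq_card; apply/subsetP=> O Oface; rewrite in_setU inE Oface /=.
by case: eqP => [/untouched_face_survives ->|]; rewrite ?orbT.
Qed.
End DualDegrees.

Import Order.TTheory GRing.Theory Num.Theory.
Local Open Scope ring_scope.

Section MinimumCuts.
Variables (R : realFieldType) (D : finType) (a n : D -> D) (c : D -> R).
Variables (k : nat) (q : 'I_k -> D).
Hypothesis a_inv : involutive a.
Hypothesis c_pos : forall x, 0 < c x.
Hypothesis c_generic : forall F1 F2 : {set D},
  a_closed a F1 -> a_closed a F2 -> F1 != F2 -> ecost c F1 != ecost c F2.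

Definition min_cut (S : {set 'I_k}) (W : {set D}) : Prop :=
  separating n q S W /\
  forall W', separating n q S W' -> ecost c (cutset a W) <= ecost c (cutset a W').

Lemma cutset_a_closed (W : {set D}) : a_closed a (cutset a W).
Proof. by move=> x; rewrite !inE a_inv eq_sym. Qed.

Lemma cutsetU_a_closed (W1 W2 : {set D}) :
  a_closed a (cutset a W1 :|: cutset a W2).
Proof. by move=> x; rewrite !in_setU -!cutset_a_closed. Qed.

Lemma cutset_symdiff (W C : {set D}) :
  cutset a (symdiff W C) = symdiff (cutset a W) (cutset a C).
Proof.
apply/setP=> x; rewrite !inE.
by case: (x \in W); case: (x \in C); case: (a x \in W); case: (a x \in C).
Qed.

Lemma separating_symdiff (S : {set 'I_k}) (W C : {set D}) :
  separating n q S W -> n_closed n C -> (forall i, q i \notin C) ->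
  separating n q S (symdiff W C).
Proof.
move=> [nW sepW] nC noq; split=> [x|]; first by rewrite !inE -nW -nC.
have -> : [set i | q i \in symdiff W C] = [set i | q i \in W].
  by apply/setP=> i; rewrite !inE (negbTE (noq i)); case: (q i \in W).
by [].
Qed.

Lemma min_cut_strict (S : {set 'I_k}) (W W' : {set D}) :
  min_cut S W -> separating n q S W' -> cutset a W' != cutset a W ->
  ecost c (cutset a W) < ecost c (cutset a W').
Proof.
move=> [_ minW] sepW' neq; rewrite lt_def minW // andbT.
by apply: c_generic; rewrite ?neq //; exact: cutset_a_closed.
Qed.

Lemma ecost_symdiff_pair (E1 E2 X : {set D}) : X \subset E1 :|: E2 ->
  ecost c (symdiff E1 X) + ecost c (symdiff E2 X) <= ecost c E1 + ecost c E2.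
Proof.
move=> /subsetP XE.
suff : \sum_(x in symdiff E1 X) c x + \sum_(x in symdiff E2 X) c x
    <= \sum_(x in E1) c x + \sum_(x in E2) c x by rewrite /ecost; lra.
rewrite !(big_mkcond (fun x => x \in _)) -!big_split /=; apply: ler_sum => x _.
have := XE x; have := c_pos x; rewrite !inE.
by case: (x \in X); case: (x \in E1); case: (x \in E2) => //= cx h; lra.
Qed.

(* A terminal-free region bounded by E_S ∪ E_T has empty boundary: flipping it
   would make both cuts strictly costlier, yet cost at most as much in total. *)
Lemma min_cuts_avoid_regions (S T : {set 'I_k}) (WS WT C : {set D}) :
  min_cut S WS -> min_cut T WT -> n_closed n C -> (forall i, q i \notin C) ->
  cutset a C \subset cutset a WS :|: cutset a WT -> cutset a C = set0.
Proof.
move=> minS minT nC noq CST; apply/eqP; apply: contraT => /set0Pn[x xC].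
have flip_costlier U W : min_cut U W ->
    ecost c (cutset a W) < ecost c (symdiff (cutset a W) (cutset a C)).
  move=> minW; rewrite -cutset_symdiff; apply: (min_cut_strict minW).
    by apply: separating_symdiff => //; case: minW.
  by apply/negP => /eqP/setP/(_ x); rewrite cutset_symdiff inE xC; case: (_ \in _).
have := ecost_symdiff_pair CST.
by have := flip_costlier _ _ minS; have := flip_costlier _ _ minT; lra.
Qed.

Hypothesis n_inj : injective n.
Hypothesis G_connected :
  forall x y, connect [rel u v | (v == n u) || (v == a u)] x y.

(* Each component C of G - (E_S ∪ E_T) contains a terminal: otherwise its
   boundary is empty, so C is closed in the connected graph G, i.e. C = D. *)
Lemma terminal_in_every_component (S T : {set 'I_k}) (WS WT : {set D}) :
  S != set0 -> min_cut S WS -> min_cut T WT -> forall u, exists i,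
    connect (map_rel n (delete_edges a (cutset a WS :|: cutset a WT))) u (q i).
Proof.
move=> S0 minS minT u; set F := cutset a WS :|: cutset a WT.
set r := map_rel n (delete_edges a F).
have [/existsP//|no_q] := boolP [exists i, connect r u (q i)].
have rsym : connect_sym r.
  exact: map_rel_sym n_inj (delete_edges_involutive a_inv (cutsetU_a_closed WS WT)).
set C := [set v | connect r u v].
have rC v w : r v w -> (v \in C) = (w \in C).
  move=> rvw; rewrite !inE; apply/idP/idP => [uv|uw].
    exact: connect_trans uv (connect1 rvw).
  by apply: connect_trans uw _; rewrite rsym connect1.
have nC : n_closed n C by move=> v; apply: rC; rewrite /r /map_rel /= eqxx.
have CF : cutset a C \subset F.
  apply/subsetP=> v; rewrite inE; apply: contraR => vF.
  by rewrite (rC v (a v)) // /r /map_rel /= /delete_edges (negbTE vF) eqxx orbT.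
have noq i : q i \notin C.
  by rewrite inE; apply: contraNN no_q => uq; apply/existsP; exists i.
have /setP C_no_cut := min_cuts_avoid_regions minS minT nC noq CF.
have C_closed : closed [rel v w | (w == n v) || (w == a v)] (mem C).
  move=> v w /orP[/eqP->|/eqP->]; first exact: nC.
  by have := C_no_cut v; rewrite !inE => /negbFE/eqP.
have [i _] := set0Pn _ S0.
by have := noq i; rewrite -(closed_connect C_closed (G_connected u (q i))) inE connect0.
Qed.
End MinimumCuts.

Theorem corollary2p5 (R : realFieldType) (D : finType) (a n : D -> D)
  (c : D -> R) (k : nat) (q : 'I_k -> D) :
  connected_plane_map a n ->
  (forall x, 0 < c x) -> (forall x, c (a x) = c x) ->
  (forall F1 F2 : {set D}, a_closed a F1 -> a_closed a F2 -> F1 != F2 ->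
      ecost c F1 != ecost c F2) ->
  (forall i j, fconnect n (q i) (q j) -> i = j) ->
  forall (S T : {set 'I_k}) (ES ET : {set D}),
    S != set0 -> S != setT -> T != set0 -> T != setT ->
    min_sep_cutset a n c q S ES -> min_sep_cutset a n c q T ET ->
    (dual_high_degree a n (ES :|: ET) <= 6 * k)%N.
Proof.
move=> [a_inv a_fix n_inj G_conn euler] c_pos _ c_generic _ S T ES ET S0 _ _ _.
move=> [WS [sepS -> minS]] [WT [sepT -> minT]].
set F := cutset a WS :|: cutset a WT.
have del_inv : involutive (delete_edges a F) :=
  delete_edges_involutive a_inv (cutsetU_a_closed a_inv WS WT).
have euler_del := euler_inequality n_inj del_inv.
rewrite delete_edges_moved // in euler_del.
have comps := components_le_terminals (map_rel_sym n_inj del_inv)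
  (terminal_in_every_component a_inv c_pos c_generic n_inj G_conn S0
     (conj sepS minS) (conj sepT minT)).
have faces_le := faces_count a n WS WT.
have high := dual_high_degree_bound a_inv n_inj sepS.1 sepT.1.
rewrite -/F in faces_le high; rewrite /vertices in euler.
(* 2V + 2#faces >= |D| + 3 and <= |D| - |F| + 4k + 2#touched, while
   #high + 2#touched <= |F|; hence #high <= 4k - 3. *)
have := cardsC F; have := odd_double_half #|D|.
move: euler euler_del comps faces_le high; rewrite -!addnn.
by case: (odd _) => /=; lia.
Qed.
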